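(* Let $A$ and $B$ be rings, $f: A\to B$ an injective ring homomorphism and $J$ a proper ideal of $B$. (i) If $f(A)\cap J=\{0\}$, then $A\bowtie^{f}J$ is a weak Armendariz ring if and only if $f(A)+J$ is a weak Armendariz ring. (ii) If $J\subseteq\mathrm{nil}(B)$ and $f(A)+J$ is a weak Armendariz ring, then $A\bowtie^{f}J$ is a weak Armendariz ring.
   Context: All rings are associative with identity (not necessarily commutative), ring homomorphisms are unital, and ideals are two-sided. $\mathrm{nil}(R)$ denotes the set of nilpotent elements of a ring $R$. For a ring homomorphism $f:A\to B$ and an ideal $J$ of $B$, the amalgamation is the subring $A\bowtie^{f}J=\{(a,f(a)+j)\mid a\in A,\ j\in J\}$ of $A\times B$; $f(A)+J=\{f(a)+j: a\in A, j\in J\}$ is a subring of $B$. A ring $R$ is weak Armendariz if whenever $p(x)=\sum_{i=0}^n a_ix^i$ and $q(x)=\sum_{j=0}^m b_jx^j$ in $R[x]$ satisfy $p(x)q(x)=0$, then $a_ib_j\in\mathrm{nil}(R)$ for all $i,j$. *)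

From HB Require Import structures.
From mathcomp Require Import all_boot all_order all_algebra.
Set Implicit Arguments. Unset Strict Implicit. Unset Printing Implicit Defensive.
Import GRing.Theory.
Local Open Scope ring_scope.

Definition is_nil {R : nzRingType} (x : R) : Prop := exists n : nat, x ^+ n = 0.

Definition is_two_sided_ideal {R : nzRingType} (J : R -> Prop) : Prop :=
  [/\ J 0,
      (forall x y, J x -> J y -> J (x + y)),
      (forall x, J x -> J (- x)),
      (forall r x, J x -> J (r * x)) &
      (forall r x, J x -> J (x * r))].

Definition proper_two_sided_ideal {R : nzRingType} (J : R -> Prop) : Prop :=
  is_two_sided_ideal J /\ ~ J 1.

(* A subring S (given as a predicate on R) is weak Armendariz: this is the
   definition of weak Armendariz applied to the ring S itself, written inside R:
   polynomials over S are the polynomials of R[x] with all coefficients in S,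
   products in S[x] are products in R[x], and nilpotency in S coincides with
   nilpotency in R. *)
Definition weak_armendariz_sub {R : nzRingType} (S : R -> Prop) : Prop :=
  forall p q : {poly R},
    (forall i, S p`_i) -> (forall j, S q`_j) -> p * q = 0 ->
    forall i j, is_nil (p`_i * q`_j).

Definition amalg {A B : nzRingType} (f : A -> B) (J : B -> Prop) : A * B -> Prop :=
  fun x => exists a j, J j /\ x = (a, f a + j).

Definition fA_plus_J {A B : nzRingType} (f : A -> B) (J : B -> Prop) : B -> Prop :=
  fun b => exists a j, J j /\ b = f a + j.

(* Going down, a zero
   product of polynomials over the amalgamation projects to a zero product over
   f(A) + J, so the second components of products of coefficients are
   nilpotent; a power of such a product vanishing in its second component has
   its first component mapped by f into J, which forces nilpotency there too.
   Going up (when f(A) ∩ J = 0), coefficients of f(A) + J lift to the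
   amalgamation, and an element of the amalgamation with second component 0 is
   0, so a zero product lifts to a zero product. *)

From HB Require Import structures.
From mathcomp Require Import all_boot all_order all_algebra.
From Stdlib Require Import ClassicalEpsilon.
Import GRing.Theory.
Local Open Scope ring_scope.

Lemma is_nil_exprn (R : nzRingType) (x : R) (n : nat) :
  is_nil (x ^+ n) -> is_nil x.
Proof. by case=> m xnm0; exists (n * m)%N; rewrite exprM. Qed.

Lemma is_nil_rmorph (R S : nzRingType) (g : {rmorphism R -> S}) (x : R) :
  is_nil x -> is_nil (g x).
Proof. by case=> n xn0; exists n; rewrite -rmorphXn xn0 rmorph0. Qed.

Lemma is_nil_rmorph_inj (R S : nzRingType) (g : {rmorphism R -> S}) (x : R) :
  injective g -> is_nil (g x) -> is_nil x.
Proof.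
by move=> g_inj [n gxn0]; exists n; apply: g_inj; rewrite rmorphXn gxn0 rmorph0.
Qed.

Lemma is_nil_pair (R S : nzRingType) (z : R * S) :
  is_nil z.1 -> is_nil z.2 -> is_nil z.
Proof.
move=> [n xn0] [m ym0]; exists (n + m)%N.
have -> : z ^+ (n + m) = (fst (z ^+ (n + m)), snd (z ^+ (n + m))) by case: (z ^+ _).
by rewrite !rmorphXn !exprD xn0 ym0 mul0r mulr0.
Qed.

Section Amalgamation.

Variables (A B : nzRingType) (f : {rmorphism A -> B}) (J : B -> Prop).
Hypothesis J_ideal : is_two_sided_ideal J.

Lemma amalgE (z : A * B) : amalg f J z <-> J (z.2 - f z.1).
Proof.
split; first by case=> a [j [Jj ->]]; rewrite /= addrC addKr.
by move=> Jz; exists z.1, (z.2 - f z.1); split; rewrite // addrC subrK; case: z Jz.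
Qed.

Lemma amalg0 : amalg f J 0.
Proof. by apply/amalgE; rewrite /= rmorph0 subr0; case: J_ideal. Qed.

Lemma amalg1 : amalg f J 1.
Proof. by apply/amalgE; rewrite /= rmorph1 subrr; case: J_ideal. Qed.

Lemma amalgD (z w : A * B) : amalg f J z -> amalg f J w -> amalg f J (z + w).
Proof.
move=> /amalgE Jz /amalgE Jw; apply/amalgE; case: J_ideal => _ JD _ _ _.
by rewrite /= rmorphD opprD addrACA; apply: JD.
Qed.

Lemma amalgM (z w : A * B) : amalg f J z -> amalg f J w -> amalg f J (z * w).
Proof.
move=> /amalgE Jz /amalgE Jw; apply/amalgE; case: J_ideal => _ JD _ JMl JMr.
have -> : (z * w).2 - f (z * w).1 = (z.2 - f z.1) * w.2 + f z.1 * (w.2 - f w.1).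
  by rewrite /= rmorphM mulrBl mulrBr addrA subrK.
by apply: JD; [apply: JMr | apply: JMl].
Qed.

Lemma amalgX (z : A * B) (n : nat) : amalg f J z -> amalg f J (z ^+ n).
Proof.
by move=> Jz; elim: n => [|n IHn]; rewrite ?expr0 ?exprS; [apply: amalg1 | apply: amalgM].
Qed.

Lemma amalg_coefM (P Q : {poly A * B}) :
  (forall i, amalg f J P`_i) -> (forall j, amalg f J Q`_j) ->
  forall k, amalg f J (P * Q)`_k.
Proof.
move=> JP JQ k; rewrite coefM.
by apply: (big_ind (amalg f J)) => [|z w|i _];
  [apply: amalg0 | apply: amalgD | apply: amalgM].
Qed.

Lemma fA_plus_J_amalg (b : B) : fA_plus_J f J b <-> exists a, amalg f J (a, b).
Proof.
split=> [[a [j [Jj ->]]] | [a /amalgE /= Jb]]; first by exists a, a, j.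
by exists a, (b - f a); split; rewrite // addrC subrK.
Qed.

Lemma amalg_poly_lift (p : {poly B}) : (forall i, fA_plus_J f J p`_i) ->
  exists2 P : {poly A * B}, forall i, amalg f J P`_i & map_poly snd P = p.
Proof.
move=> Jp; have [g Jg] := choice _ (fun i => iffLR (fA_plus_J_amalg _) (Jp i)).
exists (\poly_(i < size p) (g i, p`_i)).
  by move=> i; rewrite coef_poly; case: ltnP => _; [apply: Jg | apply: amalg0].
by apply/polyP => i; rewrite coef_map coef_poly; case: ltnP => // /(nth_default 0) ->.
Qed.

Lemma amalg_is_nil (z : A * B) : (forall a, J (f a) -> is_nil a) ->
  amalg f J z -> is_nil z.2 -> is_nil z.
Proof.
move=> Jf_nil Jz z2_nil; apply: is_nil_pair (z2_nil); case: z2_nil => n zn0.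
apply: (@is_nil_exprn _ _ n); apply: Jf_nil.
case: J_ideal => _ _ JN _ _; rewrite -[f _]opprK; apply: JN.
have /amalgE := amalgX z n Jz.
by rewrite (rmorphXn snd) (rmorphXn fst) /= zn0 sub0r.
Qed.

Lemma amalg_eq0 (z : A * B) : (forall a, J (f a) -> a = 0) ->
  amalg f J z -> z.2 = 0 -> z = 0.
Proof.
move=> Jf0; case: z => a b /amalgE /= Jz b0; rewrite b0 in Jz *; congr (_, _).
case: J_ideal => _ _ JN _ _; apply: Jf0; rewrite -[f a]opprK; apply: JN.
by rewrite -sub0r.
Qed.

Lemma weak_armendariz_amalg : (forall a, J (f a) -> is_nil a) ->
  weak_armendariz_sub (fA_plus_J f J) -> weak_armendariz_sub (amalg f J).
Proof.
move=> Jf_nil wa P Q JP JQ PQ0 i j.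
have Jp k : fA_plus_J f J (map_poly snd P)`_k.
  by apply/(fA_plus_J_amalg _); exists (P`_k).1; rewrite coef_map; case: (P`_k) (JP k).
have Jq k : fA_plus_J f J (map_poly snd Q)`_k.
  by apply/(fA_plus_J_amalg _); exists (Q`_k).1; rewrite coef_map; case: (Q`_k) (JQ k).
have pq0 : map_poly snd P * map_poly snd Q = 0 by rewrite -rmorphM /= PQ0 rmorph0.
apply: amalg_is_nil => //; first exact: amalgM.
by have := wa _ _ Jp Jq pq0 i j; rewrite !coef_map rmorphM.
Qed.

Lemma weak_armendariz_fA_plus_J : (forall a, J (f a) -> a = 0) ->
  weak_armendariz_sub (amalg f J) -> weak_armendariz_sub (fA_plus_J f J).
Proof.
move=> Jf0 wa p q Jp Jq pq0 i j.
have [P JP def_p] := amalg_poly_lift p Jp; have [Q JQ def_q] := amalg_poly_lift q Jq.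
subst p q.
have PQ0 : P * Q = 0.
  apply/polyP => k; rewrite coef0; apply: amalg_eq0 => //; first exact: amalg_coefM.
  by rewrite -(coef_map snd) rmorphM /= pq0 coef0.
by rewrite !coef_map -rmorphM; apply: is_nil_rmorph; apply: wa.
Qed.

End Amalgamation.

Theorem theorem4p1 (A B : nzRingType) (f : {rmorphism A -> B}) (J : B -> Prop) :
  injective f -> proper_two_sided_ideal J ->
  ((forall a : A, J (f a) -> f a = 0) ->
     (weak_armendariz_sub (amalg f J) <-> weak_armendariz_sub (fA_plus_J f J)))
  /\
  ((forall b : B, J b -> is_nil b) -> weak_armendariz_sub (fA_plus_J f J) ->
     weak_armendariz_sub (amalg f J)).
Proof.
move=> f_inj [J_ideal _]; split=> [Jf0 | J_nil].
  have Jf_eq0 a : J (f a) -> a = 0.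
    by move=> /Jf0 fa0; apply: f_inj; rewrite fa0 rmorph0.
  split; first exact: weak_armendariz_fA_plus_J.
  by apply: weak_armendariz_amalg => // a /Jf_eq0 ->; exists 1%N; rewrite expr1.
apply: weak_armendariz_amalg => // a /J_nil.
exact: is_nil_rmorph_inj.
Qed.
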